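(* Let $x_s<x_t$ be integers, let $C\ge 0$, and let $f:[x_s,x_t]\to\mathbb{R}$ be such that $([x_s,x_t],f)$ is an Ameso($C$) pair. Suppose there exist $x^0\in[x_s,x_t]$ and a positive integer $b$ with $[x^0-b,x^0]\subseteq[x_s,x_t]$ such that $f(x^0)=\min_{y\in[x^0-b,x^0]}f(y)$ and $f(x^0)+C\le\max_{y\in[x^0-b,x^0]}f(y)$. Then $f(x^0)=\min_{y\in[x_s,x^0]}f(y)$.
   Context: For integers $a\le b$, $[a,b]$ denotes the set of integers $\{a,a+1,\dots,b\}$. Floors and ceilings of vectors are taken componentwise. A set $D^n\subseteq\mathbb{Z}^n$ is an Ameso set if $\lceil(\vec x+\vec y)/2\rceil,\lfloor(\vec x+\vec y)/2\rfloor\in D^n$ for all $\vec x,\vec y\in D^n$. For $C\ge 0$, $(D^n,f)$ is an Ameso($C$) pair if $D^n$ is an Ameso set, $f:D^n\to\mathbb{R}$ is bounded below, and $f(\vec x)+f(\vec y)+C\ge f(\lceil(\vec x+\vec y)/2\rceil)+f(\lfloor(\vec x+\vec y)/2\rfloor)$ for all $\vec x,\vec y\in D^n$. *)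

From mathcomp Require Import all_boot all_order all_algebra.
Set Implicit Arguments. Unset Strict Implicit. Unset Printing Implicit Defensive.
Import Order.TTheory GRing.Theory Num.Theory.
Local Open Scope ring_scope.

(* floor(z/2) and ceil(z/2) for an integer z; divz is floor division for d = 2. *)
Definition half_floor (z : int) : int := (z %/ 2)%Z.
Definition half_ceil (z : int) : int := - ((- z) %/ 2)%Z.

(* Ameso sets in dimension n = 1, subsets of Z given as predicates. *)
Definition ameso_set (D : pred int) : Prop :=
  forall x y, D x -> D y -> D (half_ceil (x + y)) /\ D (half_floor (x + y)).

(* Ameso(C) pair (D, f); f is a total function on int, only its values on D matter. *)
Definition ameso_pair (R : realFieldType) (C : R) (D : pred int) (f : int -> R) : Prop :=
  [/\ ameso_set D,
      (exists m : R, forall x, D x -> m <= f x) &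
      (forall x y, D x -> D y ->
         f (half_ceil (x + y)) + f (half_floor (x + y)) <= f x + f y + C)].

Definition Zitv (a b : int) : pred int := fun x => (a <= x) && (x <= b).

From mathcomp Require Import all_boot all_order all_algebra.
From mathcomp Require Import zify lra.
Import Order.TTheory GRing.Theory Num.Theory.
Local Open Scope ring_scope.

(* The minimum at x0 is pushed leftwards one point at a time.  Suppose f x0 is
   minimal on (y, x0] and f exceeds f x0 + C somewhere there.  Take the leftmost
   maximiser w of f on (y, x0].  If 2w - y <= x0, the Ameso inequality for the
   pair (y, 2w - y), whose midpoint is w, gives f w <= f y + C, hence
   f x0 <= f y.  Otherwise the pair (2w - x0, x0) has midpoint w and lies in
   (y, x0], and it forces f (2w - x0) >= f w, contradicting the choice of w
   unless w = x0; in that case C <= 0, and the pair (y, x0), whose two midpoints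
   lie in (y, x0], already gives f x0 <= f y + C. *)

Lemma half_floor_bounds (z : int) : half_floor z * 2 <= z < half_floor z * 2 + 2.
Proof. by rewrite lez_floor //=; have := @ltz_ceil z 2 isT; rewrite /half_floor; lia. Qed.

Lemma half_ceil_bounds (z : int) : half_ceil z * 2 - 2 < z <= half_ceil z * 2.
Proof. by have := half_floor_bounds (- z); rewrite /half_ceil; lia. Qed.

Lemma exists_leftmost_argmax {disp : Order.disp_t} {T : orderType disp}
    (g : int -> T) (a c : int) :
  a <= c -> exists w, [/\ a <= w <= c,
    forall z, a <= z <= c -> (g z <= g w)%O & forall z, a <= z < w -> (g z < g w)%O].
Proof.
move=> le_ac; have [n ->] : exists n : nat, c = a + n%:Z.
  by exists `|c - a|%N; rewrite gez0_abs; lia.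
elim: n => [|n [w [hw w_max w_left]]].
  exists a; split=> [|z hz|z hz]; first lia; last lia.
  by have -> : z = a by lia.
have [lt_wn | le_nw] := ltP (g w) (g (a + n.+1%:Z)).
  exists (a + n.+1%:Z); split=> [|z hz|z hz]; first lia.
    have [->//|hzn] : z = a + n.+1%:Z \/ a <= z <= a + n%:Z by lia.
    exact: le_trans (w_max z hzn) (ltW lt_wn).
  by apply: le_lt_trans lt_wn; apply: w_max; lia.
exists w; split=> [|z hz|//]; first lia.
have [->//|hzn] : z = a + n.+1%:Z \/ a <= z <= a + n%:Z by lia.
by apply: w_max.
Qed.

Definition midconvex {R : realFieldType} (C : R) (D : pred int) (f : int -> R) :=
  forall x y, D x -> D y ->
    f (half_ceil (x + y)) + f (half_floor (x + y)) <= f x + f y + C.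

Section Midconvex.
Variables (R : realFieldType) (C : R) (f : int -> R).

Lemma midconvex_sub (D D' : pred int) :
  (forall x, D' x -> D x) -> midconvex C D f -> midconvex C D' f.
Proof. by move=> sub fmid x y /sub Dx /sub Dy; apply: fmid. Qed.

Lemma midconvex_mid (D : pred int) x y w : midconvex C D f ->
  D x -> D y -> x + y = w * 2 -> f w *+ 2 <= f x + f y + C.
Proof.
move=> fmid Dx Dy xyw; have := fmid _ _ Dx Dy.
have := half_floor_bounds (x + y); have := half_ceil_bounds (x + y) => hc hf.
have -> : half_ceil (x + y) = w by lia.
by have -> : half_floor (x + y) = w by lia; rewrite mulr2n.
Qed.

Variables (y x0 : int).
Hypotheses (fmid : midconvex C (Zitv y x0) f) (y_lt : y + 2 <= x0).
Hypothesis x0_min : forall z, Zitv (y + 1) x0 z -> f x0 <= f z.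

Lemma min_le_left_addC : f x0 <= f y + C.
Proof.
have := fmid y x0; rewrite /Zitv => /(_ ltac:(lia) ltac:(lia)).
have := half_floor_bounds (y + x0); have := half_ceil_bounds (y + x0) => hc hf.
have := x0_min (half_ceil (y + x0)); have := x0_min (half_floor (y + x0)).
rewrite /Zitv => /(_ ltac:(lia)) ge_f /(_ ltac:(lia)); lra.
Qed.

Lemma min_le_left :
  (exists2 w, Zitv (y + 1) x0 w & f x0 + C <= f w) -> f x0 <= f y.
Proof.
case=> w0 /andP[w0_ge w0_le] hfw0.
have [|w [hw w_max w_left]] := exists_leftmost_argmax f (y + 1) x0; first lia.
have {hfw0}hfw : f x0 + C <= f w by apply: le_trans hfw0 (w_max _ _); exact/andP.
have [reflect_in | reflect_out] := leP (2 * w - y) x0.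
  have := @midconvex_mid _ y (2 * w - y) w fmid.
  rewrite /Zitv => /(_ ltac:(lia) ltac:(lia) ltac:(lia)).
  by have := w_max (2 * w - y) ltac:(lia); lra.
have [w_x0 | w_lt] : w = x0 \/ w < x0 by lia.
  by move: hfw; rewrite w_x0 => hC; have := min_le_left_addC; lra.
have := @midconvex_mid _ (2 * w - x0) x0 w fmid.
rewrite /Zitv => /(_ ltac:(lia) ltac:(lia) ltac:(lia)).
by have := w_left (2 * w - x0) ltac:(lia); lra.
Qed.

End Midconvex.

Theorem lemma5 (R : realFieldType) (xs xt : int) (C : R) (f : int -> R)
  (x0 b : int) :
  xs < xt -> 0 <= C ->
  ameso_pair C (Zitv xs xt) f ->
  0 < b -> xs <= x0 - b -> x0 <= xt ->
  (* f(x0) = min over [x0-b, x0] *)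
  (forall y, Zitv (x0 - b) x0 y -> f x0 <= f y) ->
  (* f(x0) + C <= max over [x0-b, x0] *)
  (exists2 y, Zitv (x0 - b) x0 y & f x0 + C <= f y) ->
  forall y, Zitv xs x0 y -> f x0 <= f y.
Proof.
move=> _ _ [_ _ fmid] b_gt0 xs_le x0_le f_min [w hw hfw] y.
have ge_from (k : nat) z : Zitv (x0 - b - k%:Z) x0 z -> xs <= z -> f x0 <= f z.
  elim: k z => [|k IH] z.
    by rewrite /Zitv => hz _; apply: f_min; rewrite /Zitv; lia.
  rewrite /Zitv => hz.
  have [z_in | {hz}->] : Zitv (x0 - b - k%:Z) x0 z \/ z = x0 - b - k.+1%:Z
    by rewrite /Zitv; lia.
    exact: IH.
  move=> xs_z; apply: min_le_left.
  - by apply: midconvex_sub fmid; rewrite /Zitv => u; lia.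
  - lia.
  - by move=> u; rewrite /Zitv => hu; apply: IH; rewrite /Zitv; lia.
  - by exists w => //; move: hw; rewrite /Zitv; lia.
rewrite /Zitv => hy.
by apply: (ge_from (absz (x0 - b - xs)%R)); rewrite /Zitv; lia.
Qed.
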